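(* Fix $N\ge 3$ and $\lambda>0$, and regard the quantity $F(1)$ defined by the recursion in the context as a function of $p\in[0,1)$. Then, as $p\downarrow 0$, $$F(1)=F_0(1)-\lambda^{-1}H_{N-1}\,p+o(p),$$ where $F_0(1)=\sum_{i=1}^{N-1}\frac{1}{\lambda i(N-i)}=\frac{2}{\lambda N}H_{N-1}$ and $H_n=\sum_{k=1}^n1/k$.
   Context: For $N\ge3$, $\lambda>0$, $p\in[0,1)$, define $F^{(a)}(i)$ for $2\le i\le N-1$, $1\le a\le i-1$ by $F^{(a)}(N-1)=\frac{(1-p)^a}{\lambda(N-1)}$ and, for $2\le i\le N-2$, $F^{(a)}(i)=(1-p)^{a(N-i)}\big(\frac{1}{\lambda i(N-i)}+F^{(1)}(i+1)\big)+\sum_{c=1}^{N-i-1}\binom{N-i}{c}[1-(1-p)^a]^c(1-p)^{a(N-i-c)}F^{(c)}(i+c)$, and set $F(1)=(1-p)^{N-1}\big(\frac{1}{\lambda(N-1)}+F^{(1)}(2)\big)+\sum_{c=1}^{N-2}\binom{N-1}{c}p^c(1-p)^{N-1-c}F^{(c)}(1+c)$. (By the paper's Theorem 1, $F(1)$ is the expected flooding time in an $N$-node network whose edges alternate between ON periods of mean $\mu^{-1}$ and exponential OFF periods of mean $\lambda^{-1}$, with stationary ON probability $p=\lambda/(\lambda+\mu)$ and instantaneous message transmission over ON edges; $F_0(1)$ is its value at $p=0$.) *)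

From Stdlib Require Import Reals Lra Lia Arith List.
Open Scope R_scope.

Definition sumR (f : nat -> R) (l : list nat) : R :=
  fold_right (fun k acc => f k + acc) 0 l.

(* sum_{c=lo}^{hi} f c  (empty if hi < lo) *)
Definition sum_range (lo hi : nat) (f : nat -> R) : R :=
  sumR f (seq lo (S hi - lo)).

Definition harm (n : nat) : R := sum_range 1 n (fun k => / INR k).

(* One step of the recursion: value of F^{(a)}(i) for 2 <= i <= N-2,
   given a table T holding F^{(b)}(j) for j > i. *)
Definition Fstep (N : nat) (lam p : R) (T : nat -> nat -> R) (i a : nat) : R :=
  (1 - p) ^ (a * (N - i)) * (1 / (lam * INR i * INR (N - i)) + T (i + 1)%nat 1%nat)
  + sum_range 1 (N - i - 1)
      (fun c => C (N - i) c * (1 - (1 - p) ^ a) ^ c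
                * (1 - p) ^ (a * (N - i - c)) * T (i + c)%nat c).

(* Ftab N lam p m j a = F^{(a)}(j), valid for N-1-m <= j <= N-1. *)
Fixpoint Ftab (N : nat) (lam p : R) (m : nat) : nat -> nat -> R :=
  match m with
  | O => fun j a => if Nat.eqb j (N - 1) then (1 - p) ^ a / (lam * INR (N - 1)) else 0
  | S m' =>
      let T := Ftab N lam p m' in
      let i := (N - 1 - S m')%nat in
      fun j a => if Nat.eqb j i then Fstep N lam p T i a else T j a
  end.

(* F^{(a)}(i), meaningful for 2 <= i <= N-1, 1 <= a <= i-1. *)
Definition Fa (N : nat) (lam p : R) (i a : nat) : R :=
  Ftab N lam p (N - 1 - i) i a.

Definition F1 (N : nat) (lam p : R) : R :=
  (1 - p) ^ (N - 1) * (1 / (lam * INR (N - 1)) + Fa N lam p 2 1)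
  + sum_range 1 (N - 2)
      (fun c => C (N - 1) c * p ^ c * (1 - p) ^ (N - 1 - c) * Fa N lam p (1 + c) c).

From Stdlib Require Import Reals Lra Lia Arith List.
From Coquelicot Require Import Coquelicot.
Open Scope R_scope.

(* Every quantity of the recursion is a polynomial in p, so it
   suffices to compute its value and its derivative at p = 0 and to invoke the
   definition of the derivative for the o(p) estimate.  At p = 0 all factors
   (1 - p)^k equal 1 and all factors p^c, (1 - (1 - p)^a)^c with c >= 1 vanish,
   so F^(a)(j) equals the tail sum  V(j) = sum_{i=j}^{N-1} 1/(lam i (N-i)).
   Differentiating, only the c = 1 term of each binomial sum survives, and a
   backward induction on j gives the slope
       F^(a)(j)'(0) = - a/(lam j) - sum_{k=j+1}^{N-1} 1/(lam k).
   Feeding these into the formula for F(1) yields F(1) = V(1) at p = 0 and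
   F(1)'(0) = - H_{N-1}/lam. *)

Lemma sumR_app f l1 l2 : sumR f (l1 ++ l2) = sumR f l1 + sumR f l2.
Proof. induction l1; simpl; [ring | rewrite IHl1; ring]. Qed.

Lemma sumR_ext_in f g l : (forall c, In c l -> f c = g c) -> sumR f l = sumR g l.
Proof.
  induction l as [|x l IH]; simpl; intros H; auto.
  rewrite H, IH by auto; reflexivity.
Qed.

Lemma sumR_zero l : sumR (fun _ => 0) l = 0.
Proof. induction l; simpl; [reflexivity | rewrite IHl; ring]. Qed.

Lemma sumR_plus f g l : sumR (fun k => f k + g k) l = sumR f l + sumR g l.
Proof. induction l; simpl; [ring | rewrite IHl; ring]. Qed.

Lemma sumR_scal k f l : sumR (fun c => k * f c) l = k * sumR f l.
Proof. induction l; simpl; [ring | rewrite IHl; ring]. Qed.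

Lemma sumR_rev f l : sumR f (rev l) = sumR f l.
Proof. induction l; simpl; auto. rewrite sumR_app; simpl. rewrite IHl; ring. Qed.

Lemma sumR_map f g l : sumR f (map g l) = sumR (fun k => f (g k)) l.
Proof. induction l; simpl; auto. rewrite IHl; auto. Qed.

Lemma sum_range_S lo hi f : (lo <= hi)%nat ->
  sum_range lo hi f = f lo + sum_range (S lo) hi f.
Proof.
  intros H. unfold sum_range.
  replace (S hi - lo)%nat with (S (S hi - S lo)) by lia. reflexivity.
Qed.

Lemma sum_range_nil lo hi f : (hi < lo)%nat -> sum_range lo hi f = 0.
Proof. intros H. unfold sum_range. replace (S hi - lo)%nat with 0%nat by lia. reflexivity. Qed.

Lemma sum_range_ext lo hi f g : (forall c, (lo <= c <= hi)%nat -> f c = g c) ->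
  sum_range lo hi f = sum_range lo hi g.
Proof.
  intros H. unfold sum_range. apply sumR_ext_in.
  intros c Hc. apply in_seq in Hc. apply H; lia.
Qed.

Lemma sum_range_zero lo hi : sum_range lo hi (fun _ => 0) = 0.
Proof. apply sumR_zero. Qed.

Lemma sum_range_only_first n (X : nat -> R) : (1 <= n)%nat ->
  sum_range 1 n (fun c => if Nat.eqb c 1 then X c else 0) = X 1%nat.
Proof.
  intros H. rewrite sum_range_S by lia.
  rewrite (sum_range_ext _ _ _ (fun _ => 0)), sum_range_zero; [simpl; ring |].
  intros c Hc. destruct (Nat.eqb_spec c 1); [lia | reflexivity].
Qed.

Lemma rev_seq1 n : rev (seq 1 n) = map (fun i => S n - i)%nat (seq 1 n).
Proof.
  induction n as [|n IH]; auto.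
  change (seq 1 (S n)) with (1 :: seq 2 n)%nat at 2.
  rewrite (seq_S n 1), rev_app_distr, IH.
  cbn [rev app map]. f_equal.
  rewrite <- (seq_shift n 1), map_map. apply map_ext. intros; lia.
Qed.

Lemma sum_range_rev n f : sum_range 1 n (fun i => f (S n - i)%nat) = sum_range 1 n f.
Proof.
  unfold sum_range. replace (S n - 1)%nat with n by lia.
  rewrite <- sumR_map, <- rev_seq1, sumR_rev. reflexivity.
Qed.

Lemma INR_neq_0 n : (1 <= n)%nat -> INR n <> 0.
Proof. intros H. apply not_0_INR. lia. Qed.

Lemma binomial_n_1 n : (1 <= n)%nat -> Binomial.C n 1 = INR n.
Proof.
  intros H. unfold Binomial.C. destruct n as [|n]; [lia |].
  replace (S n - 1)%nat with n by lia. rewrite fact_simpl, mult_INR.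
  simpl (INR (fact 1)). field. apply INR_fact_neq_0.
Qed.

Lemma is_derive_value_eq (f : R -> R) x l l' : is_derive f x l -> l = l' -> is_derive f x l'.
Proof. intros D <-; exact D. Qed.

Lemma is_derive_one_minus_pow k : is_derive (fun p : R => (1 - p) ^ k) 0 (- INR k).
Proof. auto_derive; [trivial |]. rewrite Ropp_0, Rplus_0_r, pow1. ring. Qed.

Lemma is_derive_one_minus_one_minus_pow a :
  is_derive (fun p : R => 1 - (1 - p) ^ a) 0 (INR a).
Proof. auto_derive; [trivial |]. rewrite Ropp_0, Rplus_0_r, pow1. ring. Qed.

(* A product  A * h^c * q * g  with h(0) = 0 has derivative zero at 0 unless
   c = 1: this is why only the c = 1 terms of the binomial sums matter. *)
Lemma is_derive_vanishing_power_term (A : R) (h q g : R -> R) dh dq dg v c :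
  is_derive h 0 dh -> h 0 = 0 -> is_derive q 0 dq -> q 0 = 1 ->
  is_derive g 0 dg -> g 0 = v -> (1 <= c)%nat ->
  is_derive (fun p => A * h p ^ c * q p * g p) 0
            (if Nat.eqb c 1 then A * dh * v else 0).
Proof.
  intros Hh h0 Hq q0 Hg g0 Hc.
  pose proof (is_derive_scal _ _ A _ (is_derive_pow h c 0 dh Hh)) as Hpow.
  pose proof (is_derive_mult _ _ _ _ _ Hpow Hq Rmult_comm) as Hpq.
  pose proof (is_derive_mult _ _ _ _ _ Hpq Hg Rmult_comm) as Hall.
  apply (is_derive_value_eq _ _ _ _ Hall).
  rewrite h0, q0, g0. unfold plus, mult; simpl.
  destruct c as [|[|c]]; [lia | |]; simpl; ring.
Qed.

Lemma is_derive_sum_range (f : nat -> R -> R) d lo hi x :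
  (forall c, (lo <= c <= hi)%nat -> is_derive (f c) x (d c)) ->
  is_derive (fun p => sum_range lo hi (fun c => f c p)) x (sum_range lo hi d).
Proof.
  intros H. unfold sum_range.
  assert (Hin : forall c, In c (seq lo (S hi - lo)) -> is_derive (f c) x (d c)).
  { intros c Hc. apply in_seq in Hc. apply H; lia. }
  induction (seq lo (S hi - lo)) as [|c l IH]; simpl.
  - exact (is_derive_const 0 x).
  - exact (is_derive_plus _ _ _ _ _ (Hin c (in_eq c l))
             (IH (fun c' Hc' => Hin c' (in_cons c c' l Hc')))).
Qed.

Section Recursion.

Variables (N : nat) (lam : R).
Hypotheses (HN : (3 <= N)%nat) (Hlam : 0 < lam).

Definition tail_value (j : nat) : R :=
  sum_range j (N - 1) (fun i => 1 / (lam * INR i * INR (N - i))).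

Definition tail_slope (j a : nat) : R :=
  - INR a / (lam * INR j) - sum_range (S j) (N - 1) (fun k => 1 / (lam * INR k)).

Definition table_ok (T : R -> nat -> nat -> R) (i : nat) : Prop :=
  forall c b, (1 <= c <= N - i - 1)%nat ->
    T 0 (i + c)%nat b = tail_value (i + c) /\
    is_derive (fun p => T p (i + c)%nat b) 0 (tail_slope (i + c) b).

Lemma tail_value_step i : (i <= N - 1)%nat ->
  tail_value i = 1 / (lam * INR i * INR (N - i)) + tail_value (S i).
Proof. intros H. apply sum_range_S; exact H. Qed.

Lemma Fstep_at_0 T i a : (2 <= i <= N - 2)%nat -> table_ok T i ->
  Fstep N lam 0 (T 0) i a = tail_value i.
Proof.
  intros Hi HT. destruct (HT 1%nat 1%nat) as [V1 _]; [lia |].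
  rewrite Nat.add_1_r in V1. unfold Fstep.
  rewrite (sum_range_ext 1 (N - i - 1) _ (fun _ => 0)), sum_range_zero.
  - rewrite Nat.add_1_r, V1, Rminus_0_r, pow1, (tail_value_step i) by lia. ring.
  - intros c Hc. rewrite Rminus_0_r, pow1, Rminus_eq_0, pow_i by lia. ring.
Qed.

Lemma Fstep_derive T i a : (2 <= i <= N - 2)%nat -> table_ok T i ->
  is_derive (fun p => Fstep N lam p (T p) i a) 0 (tail_slope i a).
Proof.
  intros Hi HT. destruct (HT 1%nat 1%nat) as [V1 D1]; [lia |].
  rewrite Nat.add_1_r in V1, D1.
  assert (Hsum : is_derive
    (fun p => sum_range 1 (N - i - 1) (fun c => Binomial.C (N - i) c
       * (1 - (1 - p) ^ a) ^ c * (1 - p) ^ (a * (N - i - c)) * T p (i + c)%nat c)) 0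
    (sum_range 1 (N - i - 1) (fun c => if Nat.eqb c 1
       then Binomial.C (N - i) c * INR a * tail_value (i + c) else 0))).
  { apply is_derive_sum_range. intros c Hc. destruct (HT c c Hc) as [Vc Dc].
    apply is_derive_vanishing_power_term with (dq := - INR (a * (N - i - c)))
      (dg := tail_slope (i + c) c).
    - apply is_derive_one_minus_one_minus_pow.
    - rewrite Rminus_0_r, pow1; ring.
    - apply is_derive_one_minus_pow.
    - rewrite Rminus_0_r; apply pow1.
    - exact Dc.
    - exact Vc.
    - lia. }
  rewrite sum_range_only_first, Nat.add_1_r, binomial_n_1 in Hsum by lia.
  pose proof (is_derive_mult _ _ _ _ _ (is_derive_one_minus_pow (a * (N - i)))
    (is_derive_plus _ _ _ _ _ (is_derive_const (1 / (lam * INR i * INR (N - i))) 0) D1)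
    Rmult_comm) as Hhead.
  pose proof (is_derive_plus _ _ _ _ _ Hhead Hsum) as Hall.
  eapply is_derive_ext; [intros t; unfold Fstep; rewrite Nat.add_1_r; reflexivity |].
  apply (is_derive_value_eq _ _ _ _ Hall).
  assert (Hni : INR (N - i) <> 0) by (apply INR_neq_0; lia).
  assert (Hi0 : INR i <> 0) by (apply INR_neq_0; lia).
  assert (HSi : INR (S i) <> 0) by (apply INR_neq_0; lia).
  assert (HnSi : INR (N - S i) <> 0) by (apply INR_neq_0; lia).
  unfold tail_slope; cbn -[INR sum_range tail_value].
  rewrite V1, Rminus_0_r, pow1, mult_INR, (tail_value_step (S i)) by lia.
  rewrite (sum_range_S (S i) (N - 1) (fun k => 1 / (lam * INR k))) by lia.
  change (INR 1) with 1. field. repeat split; auto; lra.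
Qed.

Lemma Ftab_last a :
  Ftab N lam 0 0 (N - 1) a = tail_value (N - 1) /\
  is_derive (fun p => Ftab N lam p 0 (N - 1) a) 0 (tail_slope (N - 1) a).
Proof.
  assert (HN1 : INR (N - 1) <> 0) by (apply INR_neq_0; lia).
  simpl Ftab. rewrite Nat.eqb_refl. split.
  - unfold tail_value. rewrite sum_range_S, sum_range_nil by lia.
    replace (N - (N - 1))%nat with 1%nat by lia.
    rewrite Rminus_0_r, pow1. simpl INR. field. lra.
  - unfold tail_slope. rewrite sum_range_nil by lia.
    auto_derive; [trivial |]. rewrite Ropp_0, Rplus_0_r, pow1. field. lra.
Qed.

Lemma Ftab_at_0 m : (m <= N - 3)%nat -> forall j a, (N - 1 - m <= j <= N - 1)%nat ->
  Ftab N lam 0 m j a = tail_value j /\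
  is_derive (fun p => Ftab N lam p m j a) 0 (tail_slope j a).
Proof.
  induction m as [|m IH]; intros Hm j a Hj.
  - replace j with (N - 1)%nat by lia. apply Ftab_last.
  - simpl Ftab. destruct (Nat.eqb_spec j (N - 1 - S m)) as [->|Hne]; [| apply IH; lia].
    assert (HT : table_ok (fun p => Ftab N lam p m) (N - 1 - S m)).
    { intros c b Hc. apply IH; lia. }
    split; [apply (Fstep_at_0 (fun p => Ftab N lam p m)) | apply Fstep_derive]; auto; lia.
Qed.

Lemma Fa_at_0 i a : (2 <= i <= N - 1)%nat ->
  Fa N lam 0 i a = tail_value i /\
  is_derive (fun p => Fa N lam p i a) 0 (tail_slope i a).
Proof. intros H. apply Ftab_at_0; lia. Qed.

Lemma F1_at_0 : F1 N lam 0 = tail_value 1.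
Proof.
  destruct (Fa_at_0 2 1) as [V2 _]; [lia |].
  unfold F1. rewrite (sum_range_ext 1 (N - 2) _ (fun _ => 0)), sum_range_zero.
  - rewrite V2, Rminus_0_r, pow1, (tail_value_step 1) by lia.
    change (INR 1) with 1. rewrite Rmult_1_r. ring.
  - intros c Hc. rewrite pow_i by lia. ring.
Qed.

(* The slope of F(1) at 0: the (N-1) V(2) contributions of the first term and
   of the c = 1 term cancel, leaving -1/lam plus the slope of F^(1)(2). *)
Lemma F1_derive : is_derive (fun p => F1 N lam p) 0 (- / lam * harm (N - 1)).
Proof.
  destruct (Fa_at_0 2 1) as [V2 D2]; [lia |].
  assert (Hsum : is_derive
    (fun p => sum_range 1 (N - 2) (fun c =>
       Binomial.C (N - 1) c * p ^ c * (1 - p) ^ (N - 1 - c) * Fa N lam p (1 + c) c)) 0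
    (sum_range 1 (N - 2) (fun c => if Nat.eqb c 1
       then Binomial.C (N - 1) c * 1 * tail_value (1 + c) else 0))).
  { apply is_derive_sum_range. intros c Hc. destruct (Fa_at_0 (1 + c) c) as [Vc Dc]; [lia |].
    apply is_derive_vanishing_power_term with (dq := - INR (N - 1 - c))
      (dg := tail_slope (1 + c) c).
    - exact (is_derive_id 0).
    - reflexivity.
    - apply is_derive_one_minus_pow.
    - rewrite Rminus_0_r; apply pow1.
    - exact Dc.
    - exact Vc.
    - lia. }
  rewrite sum_range_only_first, binomial_n_1 in Hsum by lia.
  pose proof (is_derive_mult _ _ _ _ _ (is_derive_one_minus_pow (N - 1))
    (is_derive_plus _ _ _ _ _ (is_derive_const (1 / (lam * INR (N - 1))) 0) D2)
    Rmult_comm) as Hhead.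
  pose proof (is_derive_plus _ _ _ _ _ Hhead Hsum) as Hall.
  apply (is_derive_value_eq _ _ _ _ Hall).
  assert (HN1 : INR (N - 1) <> 0) by (apply INR_neq_0; lia).
  unfold tail_slope, harm; cbn -[INR sum_range].
  rewrite V2, Rminus_0_r, pow1, (sum_range_S 1 (N - 1)), (sum_range_S 2 (N - 1)) by lia.
  unfold sum_range.
  rewrite (sumR_ext_in (fun k => 1 / (lam * INR k)) (fun k => / lam * / INR k)), sumR_scal.
  - change (INR 1) with 1; change (INR 2) with 2. field. lra.
  - intros k Hk. apply in_seq in Hk. field. split; [apply INR_neq_0; lia | lra].
Qed.

(* Partial fractions 1/(i(N-i)) = (1/i + 1/(N-i))/N and the symmetry
   i <-> N - i give V(1) = 2 H_{N-1}/(lam N). *)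
Lemma tail_value_1_harm : tail_value 1 = 2 / (lam * INR N) * harm (N - 1).
Proof.
  assert (HN0 : INR N <> 0) by (apply INR_neq_0; lia).
  unfold tail_value.
  rewrite (sum_range_ext _ _ _ (fun i => / (lam * INR N) * (/ INR i + / INR (N - i)))).
  - assert (Hsym : sum_range 1 (N - 1) (fun i => / INR (N - i)) = harm (N - 1)).
    { unfold harm. rewrite <- (sum_range_rev (N - 1) (fun k => / INR k)).
      apply sum_range_ext. intros c Hc. do 2 f_equal. lia. }
    unfold sum_range in *. rewrite sumR_scal, sumR_plus, Hsym.
    unfold harm, sum_range. field. lra.
  - intros c Hc.
    assert (E : INR N = INR c + INR (N - c)) by (rewrite <- plus_INR; f_equal; lia).
    assert (INR c <> 0) by (apply INR_neq_0; lia).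
    assert (INR (N - c) <> 0) by (apply INR_neq_0; lia).
    rewrite E. field. repeat split; auto; lra.
Qed.

End Recursion.

Lemma is_derive_right_expansion (f : R -> R) x l : is_derive f x l ->
  forall eps, 0 < eps -> exists delta, 0 < delta /\
    forall h, 0 < h -> h < delta -> Rabs (f (x + h) - (f x + l * h)) <= eps * h.
Proof.
  intros D eps Heps. apply is_derive_Reals in D.
  destruct (D eps Heps) as [delta Hd].
  exists delta. split; [apply cond_pos |]. intros h Hh Hhd.
  assert (Hq : Rabs ((f (x + h) - f x) / h - l) < eps).
  { apply Hd; [lra | rewrite Rabs_pos_eq; lra]. }
  replace (f (x + h) - (f x + l * h)) with (h * ((f (x + h) - f x) / h - l))
    by (field; lra).
  rewrite Rabs_mult, (Rabs_pos_eq h) by lra.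
  rewrite Rmult_comm. apply Rmult_le_compat_r; lra.
Qed.

Theorem lemma1 (N : nat) (lam : R) (HN : (3 <= N)%nat) (Hlam : 0 < lam) :
  F1 N lam 0 = sum_range 1 (N - 1) (fun i => 1 / (lam * INR i * INR (N - i)))
  /\ sum_range 1 (N - 1) (fun i => 1 / (lam * INR i * INR (N - i)))
     = 2 / (lam * INR N) * harm (N - 1)
  /\ (forall eps : R, 0 < eps ->
        exists delta : R, 0 < delta /\
          forall p : R, 0 < p -> p < 1 -> p < delta ->
            Rabs (F1 N lam p - (F1 N lam 0 - / lam * harm (N - 1) * p)) <= eps * p).
Proof.
  split; [exact (F1_at_0 N lam HN Hlam) |].
  split; [exact (tail_value_1_harm N lam HN Hlam) |].
  intros eps Heps.
  destruct (is_derive_right_expansion _ 0 _ (F1_derive N lam HN Hlam) eps Heps)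
    as [delta [Hdelta Hexp]].
  exists delta. split; [exact Hdelta |]. intros p Hp _ Hpd.
  specialize (Hexp p Hp Hpd). rewrite Rplus_0_l in Hexp.
  replace (F1 N lam 0 - / lam * harm (N - 1) * p)
    with (F1 N lam 0 + - / lam * harm (N - 1) * p) by ring.
  exact Hexp.
Qed.
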